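(* Let $\Phi$ be a positive trace-preserving linear map from operators on a finite-dimensional Hilbert space $\mathcal{H}$ to operators on a finite-dimensional Hilbert space $\mathcal{H}'$. Let $\rho,\varphi$ be density operators on $\mathcal{H}$ with $S(\rho\Vert\varphi)<\infty$, $[\rho,\varphi]=0$ and $[\Phi(\rho),\Phi(\varphi)]=0$. Write $\rho=\sum_i p_i|i\rangle\langle i|$ and $\varphi=\sum_i r_i|i\rangle\langle i|$ in a common orthonormal eigenbasis, and $\Phi(\rho)=\sum_\phi p'_\phi|\phi\rangle\langle\phi|$ and $\Phi(\varphi)=\sum_\phi r'_\phi|\phi\rangle\langle\phi|$ in a common orthonormal eigenbasis. Let $p_\rho(i,\phi)=p_i\,\mathrm{tr}\{\Phi(|i\rangle\langle i|)|\phi\rangle\langle\phi|\}$ and, for $p_\rho(i,\phi)>0$, let $m(i,\phi)=(-\ln p'_\phi+\ln p_i)-(-\ln r'_\phi+\ln r_i)$. Then \[ \sum_{i,\phi:\,p_\rho(i,\phi)>0}p_\rho(i,\phi)\,e^{-m(i,\phi)}=\gamma, \] where $\gamma=\mathrm{tr}\{\Pi^\rho\,\mathcal{R}_\Phi^\varphi(\Phi(\rho))\}\in(0,1]$. Moreover, $\gamma=1$ when $\rho$ and $\varphi$ have the same support.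
   Context: $S(\rho\Vert\sigma)$ is the quantum relative entropy ($\mathrm{tr}\{\rho(\ln\rho-\ln\sigma)\}$ if $\mathrm{supp}\,\rho\subseteq\mathrm{supp}\,\sigma$, $+\infty$ otherwise). $\Pi^\rho$ is the orthogonal projection onto the support of $\rho$. The Petz recovery map with reference state $\varphi$ is $\mathcal{R}_\Phi^\varphi(X)=\varphi^{1/2}\Phi^\dagger\big(\Phi(\varphi)^{-1/2}X\Phi(\varphi)^{-1/2}\big)\varphi^{1/2}$, where $\Phi^\dagger$ is the Hilbert–Schmidt adjoint of $\Phi$ and inverses are taken on the support. *)

From HB Require Import structures.
From mathcomp Require Import all_boot all_order all_algebra.
From mathcomp Require Import reals ereal sequences exp.
From mathcomp.real_closed Require Import complex.

Set Implicit Arguments.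
Unset Strict Implicit.
Unset Printing Implicit Defensive.

Import Order.TTheory GRing.Theory Num.Theory.
Local Open Scope ring_scope.
Local Open Scope sesquilinear_scope.

Section QDefs.
Variable R : realType.
Local Notation C := R[i].

Definition rc (x : R) : C := (x%:C)%C.

Definition dagger m n (A : 'M[C]_(m, n)) : 'M[C]_(n, m) := A ^t*.

Definition ketbra n (u : 'cV[C]_n) : 'M[C]_n := u *m dagger u.

Definition psdmx n (A : 'M[C]_n) : Prop :=
  A \is hermsymmx /\ forall v : 'cV[C]_n, 0 <= (dagger v *m A *m v) 0 0.

Definition density n (rho : 'M[C]_n) : Prop := psdmx rho /\ \tr rho = 1.

Definition positive_map n m (Phi : 'M[C]_n -> 'M[C]_m) : Prop :=
  forall A, psdmx A -> psdmx (Phi A).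
Definition trace_preserving n m (Phi : 'M[C]_n -> 'M[C]_m) : Prop :=
  forall A, \tr (Phi A) = \tr A.

(* Hilbert-Schmidt adjoint:  tr(Y^* Phi(X)) = tr((Phi^dag Y)^* X);
   entrywise (Phi^dag Y)_{ij} = tr(Phi(E_ij)^* Y). *)
Definition hsadj n m (Phi : 'M[C]_n -> 'M[C]_m) (Y : 'M[C]_m) : 'M[C]_n :=
  \matrix_(i, j) \tr (dagger (Phi (delta_mx i j)) *m Y).

(* functional calculus of a (normal, here Hermitian) matrix via the spectral
   decomposition A = P^* diag(d) P of MathComp's spectral.v; f acts on the
   (real) eigenvalues *)
Definition mxfun n (f : R -> R) (A : 'M[C]_n) : 'M[C]_n :=
  let P := spectralmx A in
  dagger P *m diag_mx (\row_i rc (f (complex.Re (spectral_diag A 0 i)))) *m P.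

Definition mxsqrt n (A : 'M[C]_n) := mxfun (fun x => Num.sqrt x) A.
(* A^{-1/2}, inverse taken on the support *)
Definition mxinvsqrt n (A : 'M[C]_n) :=
  mxfun (fun x => if 0 < x then (Num.sqrt x)^-1 else 0) A.
Definition mxlog n (A : 'M[C]_n) := mxfun (fun x => if 0 < x then ln x else 0) A.
Definition suppproj n (A : 'M[C]_n) := mxfun (fun x => if x != 0 then 1 else 0) A.

(* supp A included in supp B (support = range = column space) *)
Definition supp_sub n (A B : 'M[C]_n) : bool := (A^T <= B^T)%MS.

Definition relent n (rho sigma : 'M[C]_n) : \bar R :=
  if supp_sub rho sigma
  then (complex.Re (\tr (rho *m (mxlog rho - mxlog sigma))))%:E
  else +oo%E.

Definition petz n m (Phi : 'M[C]_n -> 'M[C]_m) (vphi : 'M[C]_n) (X : 'M[C]_m)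
  : 'M[C]_n :=
  mxsqrt vphi *m hsadj Phi (mxinvsqrt (Phi vphi) *m X *m mxinvsqrt (Phi vphi))
    *m mxsqrt vphi.

End QDefs.

From HB Require Import structures.
From mathcomp Require Import all_boot all_order all_algebra.
From mathcomp Require Import reals ereal sequences exp.
From mathcomp.real_closed Require Import complex.
From mathcomp Require Import ring lra.
Import Order.TTheory GRing.Theory Num.Theory.
Set Implicit Arguments.
Unset Strict Implicit.
Unset Printing Implicit Defensive.
Local Open Scope ring_scope.
Local Open Scope sesquilinear_scope.

(* Everything is diagonal in the eigenbases (u_i) of rho, vphi and (v_k) of
   Phi rho, Phi vphi, so the statement is classical: T i k = <v_k|Phi(|u_i><u_i|)|v_k>
   is a stochastic matrix (positivity and trace preservation of Phi) sending p to
   p' and r to r'.  The functional calculus evaluates gamma to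
   sum_(i,k) [p_i <> 0] r_i [r'_k > 0] (p'_k / r'_k) T i k.  A term with
   p_i T i k > 0 has r_i, r'_k > 0 (supp rho <= supp vphi) and equals
   p_i T i k e^(-m(i,k)); the other terms vanish.  Summing over i first bounds
   gamma by sum_(k | r'_k > 0) p'_k <= 1.  If also supp vphi <= supp rho, the
   sum over i is exact and r'_k = 0 forces p'_k = 0, so gamma = 1. *)

Lemma psumr_gt0 (R : numDomainType) (I : finType) (P : pred I) (F : I -> R) j :
  (forall i, P i -> 0 <= F i) -> P j -> 0 < F j -> 0 < \sum_(i | P i) F i.
Proof.
move=> F_ge0 Pj Fj_gt0; rewrite (bigD1 j) //= ltr_pwDl // sumr_ge0 // => i.
by move=> /andP[/F_ge0].
Qed.

Section RecoveredMass.
Variables (R : realType) (n m : nat).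
Variables (p r : 'I_n -> R) (p' r' : 'I_m -> R) (T : 'I_n -> 'I_m -> R).

Definition entropy_production i k : R :=
  (- ln (p' k) + ln (p i)) - (- ln (r' k) + ln (r i)).

Definition recovered_mass : R :=
  \sum_i \sum_k
    (if p i != 0 then r i else 0) * (if 0 < r' k then p' k / r' k else 0) * T i k.

Hypotheses (p_ge0 : forall i, 0 <= p i) (r_ge0 : forall i, 0 <= r i).
Hypotheses (T_ge0 : forall i k, 0 <= T i k) (T_sum1 : forall i, \sum_k T i k = 1).
Hypotheses (p'E : forall k, p' k = \sum_i p i * T i k)
  (r'E : forall k, r' k = \sum_i r i * T i k).
Hypothesis supp_pr : forall i, p i != 0 -> r i != 0.

Lemma ler_push_term (a : 'I_n -> R) i k :
  (forall j, 0 <= a j) -> a i * T i k <= \sum_j a j * T j k.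
Proof.
by move=> a_ge0; rewrite (bigD1 i) //= lerDl sumr_ge0 // => j _; rewrite mulr_ge0.
Qed.

Lemma p'_ge0 k : 0 <= p' k.
Proof. by rewrite p'E sumr_ge0 // => i _; rewrite mulr_ge0. Qed.

Lemma fluctuation_term i k :
  (if 0 < p i * T i k then p i * T i k * expR (- entropy_production i k) else 0) =
  (if p i != 0 then r i else 0) * (if 0 < r' k then p' k / r' k else 0) * T i k.
Proof.
case: ltP => [pT_gt0 | pT_le0]; last first.
  have /eqP : p i * T i k = 0 by apply/eqP; rewrite eq_le pT_le0 mulr_ge0.
  by rewrite mulf_eq0 => /orP[] /eqP ->; rewrite ?eqxx ?mulr0 ?mul0r.
have p_gt0 : 0 < p i.
  by rewrite lt0r p_ge0 andbT; apply: contraTneq pT_gt0 => ->; rewrite mul0r ltxx.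
have T_gt0 : 0 < T i k.
  by rewrite lt0r T_ge0 andbT; apply: contraTneq pT_gt0 => ->; rewrite mulr0 ltxx.
have r_gt0 : 0 < r i by rewrite lt0r r_ge0 supp_pr ?gt_eqF.
have r'_gt0 : 0 < r' k.
  by rewrite r'E (lt_le_trans _ (ler_push_term i k r_ge0)) ?mulr_gt0.
have p'_gt0 : 0 < p' k by rewrite p'E (lt_le_trans pT_gt0 (ler_push_term i k p_ge0)).
have -> : - entropy_production i k = (ln (p' k) + ln (r i)) - (ln (p i) + ln (r' k)).
  by rewrite /entropy_production; lra.
rewrite gt_eqF //= r'_gt0 expRD expRN !expRD !lnK ?posrE //.
by field; rewrite ?gt_eqF.
Qed.

Lemma fluctuation_sum :
  \sum_i \sum_(k | 0 < p i * T i k) p i * T i k * expR (- entropy_production i k) =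
  recovered_mass.
Proof.
apply: eq_bigr => i _; rewrite big_mkcond; apply: eq_bigr => k _.
exact: fluctuation_term.
Qed.

Lemma recovered_mass_gt0 : \sum_i p i = 1 -> 0 < recovered_mass.
Proof.
move=> p_sum1; rewrite -fluctuation_sum.
have summand_ge0 i k : 0 < p i * T i k ->
    0 <= p i * T i k * expR (- entropy_production i k).
  by move=> /ltW pT_ge0; rewrite mulr_ge0 ?expR_ge0.
have [i /andP[_ p_gt0]] : exists i, true && (0 < p i).
  by apply: psumr_neq0P => [i _|]; rewrite ?p_sum1; [exact: p_ge0 | apply/eqP/oner_neq0].
have [k /andP[_ T_gt0]] : exists k, true && (0 < T i k).
  by apply: psumr_neq0P => [k _|]; rewrite ?T_sum1; [exact: T_ge0 | apply/eqP/oner_neq0].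
have pT_gt0 : 0 < p i * T i k by rewrite mulr_gt0.
apply: (@psumr_gt0 _ _ xpredT _ i) => // [j _|]; first by apply: sumr_ge0 => l /summand_ge0.
apply: (@psumr_gt0 _ _ (fun l => 0 < p i * T i l) _ k) => // [l /summand_ge0 //|].
by rewrite mulr_gt0 ?expR_gt0.
Qed.

Lemma p'_sum1 : \sum_i p i = 1 -> \sum_k p' k = 1.
Proof.
move=> <-; under eq_bigr do rewrite p'E.
by rewrite exchange_big; apply: eq_bigr => i _; rewrite -mulr_sumr T_sum1 mulr1.
Qed.

Lemma recovered_mass_le : recovered_mass <= \sum_k (if 0 < r' k then p' k else 0).
Proof.
rewrite /recovered_mass exchange_big /=; apply: ler_sum => k _.
case: ifP => [r'_gt0 | _]; last by rewrite big1 // => i _; rewrite mulr0 mul0r.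
set y := p' k / r' k.
have -> : p' k = y * r' k by rewrite /y divfK ?lt0r_neq0.
rewrite r'E mulr_sumr; apply: ler_sum => i _.
rewrite mulrAC mulrC; apply: ler_wpM2l; first by rewrite divr_ge0 ?p'_ge0 ?ltW.
by case: ifP; rewrite ?mul0r ?mulr_ge0.
Qed.

Lemma p'_eq0 k : r' k = 0 -> p' k = 0.
Proof.
move=> r'0; rewrite p'E big1 // => i _.
have /eqP : r i * T i k = 0.
  by move: r'0; rewrite r'E => /psumr_eq0P; apply=> // j _; rewrite mulr_ge0.
rewrite mulf_eq0 => /orP[r0 | /eqP ->]; last by rewrite mulr0.
have /eqP p0 : p i == 0 by apply: contraTT r0 => /supp_pr.
by rewrite p0 mul0r.
Qed.

Lemma recovered_mass_le1 : \sum_i p i = 1 -> recovered_mass <= 1.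
Proof.
move=> /p'_sum1 <-; apply: (le_trans recovered_mass_le); apply: ler_sum => k _.
by case: ifP => // _; exact: p'_ge0.
Qed.

Lemma recovered_mass_eq1 : \sum_i p i = 1 ->
  (forall i, r i != 0 -> p i != 0) -> recovered_mass = 1.
Proof.
move=> /p'_sum1 <- supp_rp; rewrite /recovered_mass exchange_big /=.
apply: eq_bigr => k _; case: ltP => [r'_gt0 | r'_le0]; last first.
  have r'0 : r' k = 0.
    by apply/eqP; rewrite eq_le r'_le0 r'E sumr_ge0 // => i _; rewrite mulr_ge0.
  by rewrite p'_eq0 // big1 // => i _; rewrite mulr0 mul0r.
set y := p' k / r' k.
have -> : p' k = y * r' k by rewrite /y divfK ?lt0r_neq0.
rewrite r'E mulr_sumr; apply: eq_bigr => i _.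
have -> : (if p i != 0 then r i else 0) = r i.
  by case: eqVneq => [p0 | //]; apply/esym/eqP/contraT => /supp_rp; rewrite p0 eqxx.
by rewrite mulrAC mulrC.
Qed.

End RecoveredMass.

Lemma mxtrace_sum (V : nmodType) n I (r : seq I) (P : pred I) (F : I -> 'M[V]_n) :
  \tr (\sum_(i <- r | P i) F i) = \sum_(i <- r | P i) \tr (F i).
Proof. exact: (big_morph _ (@mxtraceD _ _) (mxtrace0 _ _)). Qed.

Lemma mxtrace_trC (C : numClosedFieldType) n (X : 'M[C]_n) : \tr (X^t*) = (\tr X)^*.
Proof. by rewrite trace_map_mx mxtrace_tr. Qed.

Lemma unitarymx_tV (C : numClosedFieldType) n (U : 'M[C]_n) :
  U \is unitarymx -> U^t* *m U = 1%:M.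
Proof. by rewrite -trmxC_unitary => /unitarymxP; rewrite trmxCK. Qed.

(* An intertwiner of diag d and diag e can only link equal eigenvalues. *)
Lemma diag_mx_map_intertwine (F : idomainType) n m (Q : 'M[F]_(n, m))
    (d : 'rV[F]_n) (e : 'rV[F]_m) (g : F -> F) :
  diag_mx d *m Q = Q *m diag_mx e ->
  diag_mx (map_mx g d) *m Q = Q *m diag_mx (map_mx g e).
Proof.
move=> /matrixP dQ; apply/matrixP => a b; have := dQ a b.
rewrite !(mul_mx_diag, mul_diag_mx) !mxE.
have [->|Qab_neq0] := eqVneq (Q a b) 0; first by rewrite !mulr0 !mul0r.
by rewrite [Q a b * _]mulrC => /(mulIf Qab_neq0) ->; rewrite mulrC.
Qed.

Lemma unitary_diag_map (C : numClosedFieldType) n (P W : 'M[C]_n)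
    (d e : 'rV[C]_n) (g : C -> C) :
  P \is unitarymx -> W \is unitarymx ->
  P^t* *m diag_mx d *m P = W^t* *m diag_mx e *m W ->
  P^t* *m diag_mx (map_mx g d) *m P = W^t* *m diag_mx (map_mx g e) *m W.
Proof.
move=> Pu Wu dPeW; set Q := P *m W^t*.
have QW : Q *m W = P by rewrite -mulmxA unitarymx_tV // mulmx1.
have PQ : P^t* *m Q = W^t* by rewrite mulmxA unitarymx_tV // mul1mx.
have dQ : diag_mx d *m Q = Q *m diag_mx e.
  have := congr1 (fun X => P *m X *m W^t*) dPeW.
  by rewrite /= !mulmxA (unitarymxP Pu) mul1mx mulmxtVK.
clearbody Q; have -> : P^t* *m diag_mx (map_mx g d) *m P =
    P^t* *m (diag_mx (map_mx g d) *m Q) *m W.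
  by rewrite mulmxA -[_ *m Q *m W]mulmxA QW.
by rewrite (diag_mx_map_intertwine _ dQ) !mulmxA PQ.
Qed.

Lemma spectral_map (C : numClosedFieldType) n (A W : 'M[C]_n) (e : 'rV[C]_n)
    (g : C -> C) :
  W \is unitarymx -> A = W^t* *m diag_mx e *m W ->
  (spectralmx A)^t* *m diag_mx (map_mx g (spectral_diag A)) *m spectralmx A =
  W^t* *m diag_mx (map_mx g e) *m W.
Proof.
move=> Wu A_eq; have A_normal : A \is normalmx.
  by apply/orthomx_spectral_subproof; exists (W, e); rewrite ?invmx_unitary.
apply: unitary_diag_map => //; first exact: spectral_unitarymx.
by have := orthomx_spectralP A_normal; rewrite invmx_unitary ?spectral_unitarymx // => <-.
Qed.

HB.instance Definition _ (R : realType) :=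
  GRing.RMorphism.copy (@rc R) (real_complex R).

Section ComplexMatrices.
Variable R : realType.
Local Notation C := R[i].

Lemma rc_inj : injective (@rc R).
Proof. exact: complexI. Qed.

Lemma rc_gt0 (x : R) : (0 < rc x) = (0 < x).
Proof. exact: (ltcR 0 x). Qed.

Lemma rc_le1 (x : R) : (rc x <= 1) = (x <= 1).
Proof. exact: (lecR x 1). Qed.

Lemma rc_conj (x : R) : (rc x)^* = rc x.
Proof. exact: conjc_real. Qed.

Lemma ketbra_psd n (u : 'cV[C]_n) : psdmx (ketbra u).
Proof.
split.
  apply/is_hermitianmxP; rewrite expr0 scale1r /ketbra /dagger.
  by apply/matrixP => a b; rewrite !mxE !big_ord1 !mxE rmorphM /= conjCK mulrC.
move=> v; rewrite /ketbra mulmxA -mulmxA mxE big_ord1.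
have -> : (dagger u *m v) 0 0 = ((dagger v *m u) 0 0)^*.
  rewrite !mxE rmorph_sum; apply: eq_bigr => j _.
  by rewrite !mxE rmorphM /= conjCK mulrC.
exact: mulcJ_ge0.
Qed.

Lemma tr_mul_ketbra n (M : 'M[C]_n) (w : 'cV[C]_n) :
  \tr (M *m ketbra w) = (dagger w *m M *m w) 0 0.
Proof. by rewrite /ketbra mulmxA mxtrace_mulC mulmxA /mxtrace big_ord1. Qed.

Lemma tr_mul_hsadj n m (Phi : {linear 'M[C]_n -> 'M[C]_m})
    (B : 'M[C]_n) (Y : 'M[C]_m) :
  B^t* = B -> Y^t* = Y -> \tr (B *m hsadj Phi Y) = (\tr (Y *m Phi B))^*.
Proof.
move=> B_herm Y_herm.
have hsadjE c a : hsadj Phi Y c a = (\tr (Y *m Phi (delta_mx c a)))^*.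
  by rewrite mxE -mxtrace_trC /dagger -[in RHS]Y_herm trmx_mul map_mxM trmxCK.
have -> : Phi B = \sum_c \sum_a B c a *: Phi (delta_mx c a).
  rewrite {1}(matrix_sum_delta B) linear_sum; apply: eq_bigr => c _.
  by rewrite linear_sum; apply: eq_bigr => a _; rewrite linearZ.
have -> : \tr (B *m hsadj Phi Y) = \sum_a \sum_c B a c * hsadj Phi Y c a.
  by apply: eq_bigr => a _; rewrite mxE.
rewrite mulmx_sumr mxtrace_sum rmorph_sum exchange_big /=.
apply: eq_bigr => a _.
rewrite mulmx_sumr mxtrace_sum rmorph_sum; apply: eq_bigr => c _.
by rewrite -scalemxAr mxtraceZ rmorphM hsadjE -[in LHS]B_herm !mxE.
Qed.

Section UnitaryDiagonal.
Variables (n : nat) (U : 'M[C]_n).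

Definition udiag (a : 'I_n -> R) : 'M[C]_n := U *m diag_mx (\row_i rc (a i)) *m U^t*.

Lemma sum_ketbra_col (a : 'I_n -> R) :
  \sum_i rc (a i) *: ketbra (col i U) = udiag a.
Proof.
apply/matrixP => x y; rewrite summxE !mxE; apply: eq_bigr => j _.
by rewrite mul_mx_diag !mxE big_ord1 !mxE mulrCA mulrA.
Qed.

Lemma udiag_herm (a : 'I_n -> R) : (udiag a)^t* = udiag a.
Proof.
have row_conj : map_mx Num.conj (\row_i rc (a i)) = \row_i rc (a i) :> 'rV[C]_n.
  by apply/rowP => i; rewrite !mxE; exact: rc_conj.
by rewrite /udiag !trmx_mul !map_mxM trmxCK mulmxA tr_diag_mx map_diag_mx row_conj.
Qed.

Hypothesis U_unitary : U \is unitarymx.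

Lemma udiagM (a b : 'I_n -> R) : udiag a *m udiag b = udiag (fun i => a i * b i).
Proof.
rewrite /udiag !mulmxA mulmxKtV // -[_ *m diag_mx _ *m diag_mx _]mulmxA mulmx_diag.
by congr (_ *m diag_mx _ *m _); apply/rowP => i; rewrite !mxE rmorphM.
Qed.

Lemma udiag1 : udiag (fun=> 1) = 1%:M.
Proof.
rewrite /udiag (_ : \row_i _ = const_mx 1); last by apply/rowP => i; rewrite !mxE rmorph1.
by rewrite diag_const_mx mulmx1 (unitarymxP U_unitary).
Qed.

Lemma dagger_col_udiag (a : 'I_n -> R) j :
  dagger (col j U) *m udiag a = rc (a j) *: dagger (col j U).
Proof.
have dagger_col : dagger (col j U) = row j (U^t*) by apply/matrixP => ? ?; rewrite !mxE.
rewrite dagger_col /udiag !mulmxA -row_mul unitarymx_tV // row1 -rowE row_diag_mx.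
by rewrite mxE -scalemxAl -rowE.
Qed.

Lemma form_udiag (a : 'I_n -> R) j :
  (dagger (col j U) *m udiag a *m col j U) 0 0 = rc (a j).
Proof.
rewrite dagger_col_udiag -scalemxAl mxE.
have -> : (dagger (col j U) *m col j U) 0 0 = (U^t* *m U) j j.
  by rewrite !mxE; apply: eq_bigr => k _; rewrite !mxE.
by rewrite unitarymx_tV // mxE eqxx mulr1.
Qed.

Lemma tr_udiag (a : 'I_n -> R) : \tr (udiag a) = rc (\sum_i a i).
Proof.
rewrite /udiag mxtrace_mulC mulmxA unitarymx_tV // mul1mx mxtrace_diag rmorph_sum.
by apply: eq_bigr => i _; rewrite mxE.
Qed.

Lemma mxfun_udiag (f : R -> R) (a : 'I_n -> R) :
  mxfun f (udiag a) = udiag (fun i => f (a i)).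
Proof.
rewrite /mxfun.
set g := fun z => rc (f (complex.Re z)).
have -> : \row_i g (spectral_diag (udiag a) 0 i) = map_mx g (spectral_diag (udiag a)).
  by apply/rowP => i; rewrite !mxE.
have Ut_unitary : U^t* \is unitarymx by rewrite trmxC_unitary.
have udiag_aE : udiag a = (U^t*)^t* *m diag_mx (\row_i rc (a i)) *m U^t*.
  by rewrite trmxCK.
rewrite /dagger (spectral_map g Ut_unitary udiag_aE) trmxCK.
by congr (_ *m diag_mx _ *m _); apply/rowP => i; rewrite !mxE.
Qed.

Lemma udiag_psd_ge0 (a : 'I_n -> R) i : psdmx (udiag a) -> 0 <= a i.
Proof. by move=> [_ /(_ (col i U))]; rewrite form_udiag /rc ler0c. Qed.

Lemma supp_sub_udiag (a b : 'I_n -> R) i :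
  supp_sub (udiag a) (udiag b) -> a i != 0 -> b i != 0.
Proof.
rewrite /supp_sub => /submxP[D udiag_aD]; apply: contraNneq => b_i0.
have udiag_aE : udiag a = udiag b *m D^T.
  by rewrite -[udiag a]trmxK udiag_aD trmx_mul trmxK.
apply/eqP/rc_inj; rewrite -(form_udiag a i) udiag_aE mulmxA dagger_col_udiag b_i0.
by rewrite rmorph0 scale0r !mul0mx mxE.
Qed.

End UnitaryDiagonal.

Section Transition.
Variables (n m : nat) (Phi : {linear 'M[C]_n -> 'M[C]_m}).
Variables (U : 'M[C]_n) (V : 'M[C]_m).
Hypotheses (U_unitary : U \is unitarymx) (V_unitary : V \is unitarymx).
Hypothesis Phi_pos : positive_map Phi.

(* The form is real and nonnegative by positivity of Phi (transitionE), so
   taking its real part loses nothing. *)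
Definition transition i k : R :=
  complex.Re ((dagger (col k V) *m Phi (ketbra (col i U)) *m col k V) 0 0).

Lemma transitionE i k :
  (dagger (col k V) *m Phi (ketbra (col i U)) *m col k V) 0 0 = rc (transition i k).
Proof.
rewrite /transition; have := (Phi_pos (ketbra_psd (col i U))).2 (col k V).
by case: (_ 0 0) => x y /ger0_Im /= ->.
Qed.

Lemma transition_ge0 i k : 0 <= transition i k.
Proof.
by have := (Phi_pos (ketbra_psd (col i U))).2 (col k V); rewrite transitionE /rc ler0c.
Qed.

Lemma form_map_udiag (a : 'I_n -> R) k :
  (dagger (col k V) *m Phi (udiag U a) *m col k V) 0 0 =
  rc (\sum_i a i * transition i k).
Proof.
rewrite -sum_ketbra_col linear_sum mulmx_sumr mulmx_suml summxE rmorph_sum.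
by apply: eq_bigr => i _; rewrite linearZ -scalemxAr -scalemxAl mxE transitionE rmorphM.
Qed.

Lemma transition_push (a : 'I_n -> R) (b : 'I_m -> R) :
  Phi (udiag U a) = udiag V b -> forall k, b k = \sum_i a i * transition i k.
Proof. by move=> Phi_ab k; apply: rc_inj; rewrite -form_map_udiag Phi_ab form_udiag. Qed.

Lemma tr_map_ketbra i k :
  \tr (Phi (ketbra (col i U)) *m ketbra (col k V)) = rc (transition i k).
Proof. by rewrite tr_mul_ketbra transitionE. Qed.

Lemma sum_tr_map_ketbra (a : 'I_n -> R) (F : 'I_n -> 'I_m -> R) :
  \sum_i \sum_(k | 0 < rc (a i) * \tr (Phi (ketbra (col i U)) *m ketbra (col k V)))
     rc (a i) * \tr (Phi (ketbra (col i U)) *m ketbra (col k V)) * rc (F i k) =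
  rc (\sum_i \sum_(k | 0 < a i * transition i k) a i * transition i k * F i k).
Proof.
rewrite rmorph_sum; apply: eq_bigr => i _; rewrite rmorph_sum.
apply: eq_big => [k | k _]; rewrite tr_map_ketbra; first by rewrite -rmorphM rc_gt0.
by rewrite !rmorphM.
Qed.

Lemma tr_map_udiag (a : 'I_n -> R) (b : 'I_m -> R) :
  \tr (Phi (udiag U a) *m udiag V b) =
  rc (\sum_i \sum_k a i * b k * transition i k).
Proof.
rewrite -[udiag V b]sum_ketbra_col mulmx_sumr mxtrace_sum [in RHS]exchange_big rmorph_sum.
apply: eq_bigr => k _; rewrite -scalemxAr mxtraceZ tr_mul_ketbra form_map_udiag.
by rewrite -rmorphM mulr_sumr; congr rc; apply: eq_bigr => i _; rewrite mulrCA mulrA.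
Qed.

Lemma transition_sum1 : trace_preserving Phi -> forall i, \sum_k transition i k = 1.
Proof.
move=> Phi_tp i; apply: rc_inj; rewrite rmorph_sum rmorph1 /=.
under eq_bigr do rewrite -tr_map_ketbra.
have sum_ketbra1 : \sum_k ketbra (col k V) = 1%:M.
  rewrite -(udiag1 V_unitary) -sum_ketbra_col.
  by apply: eq_bigr => k _; rewrite rmorph1 scale1r.
rewrite -mxtrace_sum -mulmx_sumr sum_ketbra1 mulmx1 Phi_tp.
by rewrite -[ketbra _]mul1mx -(udiag1 U_unitary) tr_mul_ketbra form_udiag.
Qed.

Lemma tr_suppproj_petz (p r : 'I_n -> R) (p' r' : 'I_m -> R) :
  (forall i, 0 <= r i) ->
  Phi (udiag U p) = udiag V p' -> Phi (udiag U r) = udiag V r' ->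
  \tr (suppproj (udiag U p) *m petz Phi (udiag U r) (Phi (udiag U p))) =
  rc (recovered_mass p r p' r' transition).
Proof.
move=> r_ge0 Phi_p Phi_r.
rewrite /petz /suppproj /mxsqrt /mxinvsqrt Phi_p Phi_r !mxfun_udiag //.
rewrite !(udiagM V_unitary) mulmxA mxtrace_mulC 2!mulmxA 2!(udiagM U_unitary).
rewrite tr_mul_hsadj ?udiag_herm // mxtrace_mulC tr_map_udiag rc_conj.
congr rc; apply: eq_bigr => i _; apply: eq_bigr => k _; congr (_ * _ * _).
  by case: ifP; rewrite ?mul0r ?mulr0 // mul1r -expr2 sqr_sqrtr.
case: ifP => [r'_gt0 | _]; last by rewrite mulr0.
by rewrite mulrAC -invfM -expr2 sqr_sqrtr ?ltW // mulrC.
Qed.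

End Transition.

Lemma relent_lt_pinfty_supp_sub n (rho sigma : 'M[C]_n) :
  (relent rho sigma < +oo)%E -> supp_sub rho sigma.
Proof. by rewrite /relent; case: ifP. Qed.

End ComplexMatrices.

Unset Implicit Arguments.
Set Strict Implicit.

Theorem mainTheorem14 (R : realType) (n m : nat)
  (Phi : {linear 'M[R[i]]_n -> 'M[R[i]]_m})
  (rho vphi : 'M[R[i]]_n)
  (U : 'M[R[i]]_n) (p r : 'I_n -> R)
  (V : 'M[R[i]]_m) (p' r' : 'I_m -> R) :
  positive_map Phi -> trace_preserving Phi ->
  density rho -> density vphi ->
  (relent rho vphi < +oo)%E ->
  rho *m vphi = vphi *m rho ->
  Phi rho *m Phi vphi = Phi vphi *m Phi rho ->
  U \is unitarymx ->
  rho = \sum_(i < n) rc (p i) *: ketbra (col i U) ->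
  vphi = \sum_(i < n) rc (r i) *: ketbra (col i U) ->
  V \is unitarymx ->
  Phi rho = \sum_(k < m) rc (p' k) *: ketbra (col k V) ->
  Phi vphi = \sum_(k < m) rc (r' k) *: ketbra (col k V) ->
  let prho i k := rc (p i) * \tr (Phi (ketbra (col i U)) *m ketbra (col k V)) in
  let mm i k := (- ln (p' k) + ln (p i)) - (- ln (r' k) + ln (r i)) in
  let gamma := \tr (suppproj rho *m petz Phi vphi (Phi rho)) in
  \sum_(i < n) \sum_(k < m | 0 < prho i k) prho i k * rc (expR (- mm i k)) = gamma
  /\ 0 < gamma /\ gamma <= 1
  /\ (supp_sub rho vphi -> supp_sub vphi rho -> gamma = 1).
Proof.
move=> Phi_pos Phi_tp [rho_psd tr_rho] [vphi_psd _] /relent_lt_pinfty_supp_sub supp_rv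
  _ _ U_unitary rhoE vphiE V_unitary Phi_rhoE Phi_vphiE prho mm gamma.
rewrite !sum_ketbra_col in rhoE vphiE Phi_rhoE Phi_vphiE; subst rho vphi.
have p_ge0 i : 0 <= p i := udiag_psd_ge0 U_unitary i rho_psd.
have r_ge0 i : 0 <= r i := udiag_psd_ge0 U_unitary i vphi_psd.
have T_ge0 := transition_ge0 U V Phi_pos.
have T_sum1 := transition_sum1 U_unitary V_unitary Phi_pos Phi_tp.
have p'E := transition_push V_unitary Phi_pos Phi_rhoE.
have r'E := transition_push V_unitary Phi_pos Phi_vphiE.
have p_sum1 : \sum_i p i = 1 by apply: rc_inj; rewrite -(tr_udiag U_unitary).
have supp_pr i : p i != 0 -> r i != 0 := supp_sub_udiag U_unitary supp_rv.
rewrite /gamma (tr_suppproj_petz U_unitary V_unitary Phi_pos r_ge0 Phi_rhoE Phi_vphiE).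
rewrite /prho (sum_tr_map_ketbra U V Phi_pos p (fun i k => expR (- mm i k))).
rewrite (fluctuation_sum p_ge0 r_ge0 T_ge0 p'E r'E supp_pr) rc_gt0 rc_le1.
split; first by [].
split; first exact: (recovered_mass_gt0 p_ge0 r_ge0 T_ge0 T_sum1 p'E r'E supp_pr).
split; first exact: (recovered_mass_le1 p_ge0 r_ge0 T_ge0 T_sum1 p'E r'E).
move=> _ /(supp_sub_udiag U_unitary) supp_rp.
by rewrite (recovered_mass_eq1 r_ge0 T_ge0 T_sum1 p'E r'E supp_pr) ?rmorph1.
Qed.
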